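(* Let $\Delta$ be a quasi-tree on $[n]$ of dimension $d-1$, and let $2\leq\ell\leq d-1$. For $k\ge1$ let $I_k\subset K[x_1,\ldots,x_n]$ be the ideal generated by the monomials $x_F=\prod_{i\in F}x_i$ with $F\subseteq[n]$, $|F|=k+1$, $F\notin\Delta$ (the facet ideal of $\overline{\mathrm{skel}_\Delta(k)}$). Then $I_\ell$ is generated by all squarefree monomials $u$ of degree $\ell+1$ that are divisible by some monomial generator of $I_1$.
   Context: A simplicial complex on $[n]$ is a collection of subsets of $[n]$ containing all singletons and closed under taking subsets; facets are maximal faces. A facet $F$ is a leaf if either it is the only facet, or there is a facet $G\neq F$ with $H\cap F\subseteq G\cap F$ for every facet $H\neq F$. A complex is a quasi-tree if its facets can be labeled $F_1,\ldots,F_m$ so that each $F_i$ is a leaf of the complex generated by $F_1,\ldots,F_i$. $\mathrm{skel}_\Delta(k)$ is the complex whose facets are the $k$-dimensional faces of $\Delta$, and $\bar\Gamma$ for a pure $(e-1)$-dimensional $\Gamma$ is the complex generated by the $e$-subsets of $[n]$ not in $\Gamma$. *)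

From HB Require Import structures.
From mathcomp Require Import all_boot all_order all_algebra.
From mathcomp Require Import mpoly.
Set Implicit Arguments. Unset Strict Implicit. Unset Printing Implicit Defensive.
Import GRing.Theory.
Local Open Scope ring_scope.

Definition is_complex (n : nat) (D : {set {set 'I_n}}) : Prop :=
  (forall i : 'I_n, [set i] \in D) /\
  (forall F G : {set 'I_n}, F \in D -> G \subset F -> G \in D).

Definition is_facet (n : nat) (D : {set {set 'I_n}}) (F : {set 'I_n}) : bool :=
  (F \in D) && [forall G in D, (F \subset G) ==> (G == F)].

Definition facets (n : nat) (D : {set {set 'I_n}}) : {set {set 'I_n}} :=
  [set F | is_facet D F].

(* dimension of D is (max face size) - 1; we record the max face size *)
Definition max_face_size (n : nat) (D : {set {set 'I_n}}) : nat :=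
  \max_(F in D) #|F|.

Definition is_leaf (n : nat) (Fs : seq {set 'I_n}) (F : {set 'I_n}) : Prop :=
  F \in Fs /\
  ((forall H, H \in Fs -> H = F) \/
   (exists G, [/\ G \in Fs, G != F &
      forall H, H \in Fs -> H != F -> H :&: F \subset G :&: F])).

(* quasi-tree: facets can be ordered F_1..F_m with F_i a leaf of the complex
   generated by F_1..F_i (whose facets are exactly F_1..F_i). *)
Definition quasi_tree (n : nat) (D : {set {set 'I_n}}) : Prop :=
  exists s : seq {set 'I_n},
    uniq s /\ (forall F, F \in s = (F \in facets D)) /\
    (forall i, (i < size s)%N -> is_leaf (take i.+1 s) (nth set0 s i)).

Definition xF (K : comNzRingType) (n : nat) (F : {set 'I_n}) : {mpoly K[n]} :=
  \prod_(i in F) 'X_i.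

Definition in_ideal (R : comNzRingType) (S : R -> Prop) (p : R) : Prop :=
  exists s : seq (R * R), (forall c, c \in s -> S c.2) /\
    p = \sum_(c <- s) c.1 * c.2.

Definition gens_I (K : comNzRingType) (n : nat) (D : {set {set 'I_n}}) (k : nat)
  (p : {mpoly K[n]}) : Prop :=
  exists F : {set 'I_n}, [/\ #|F| = k.+1, F \notin D & p = xF K F].

Definition gens_J (K : comNzRingType) (n : nat) (D : {set {set 'I_n}}) (l : nat)
  (u : {mpoly K[n]}) : Prop :=
  exists F : {set 'I_n}, [/\ #|F| = l.+1, u = xF K F &
    exists g, gens_I D 1 g /\ exists q : {mpoly K[n]}, u = q * g].

From HB Require Import structures.
From mathcomp Require Import all_boot all_order all_algebra.
From mathcomp Require Import mpoly.
Set Implicit Arguments. Unset Strict Implicit. Unset Printing Implicit Defensive.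
Import GRing.Theory.
Local Open Scope ring_scope.

(* Quasi-trees are flag complexes.  Peel the facets off in leaf order: if the
   pairs of S are covered by facets but S does not lie in the last leaf F,
   then some x of S is outside F, the facet covering {x, y} for y in S :&: F
   is another facet, so S :&: F lies in the branch G of F, and the pairs
   covered by F are already covered by G.  Hence every minimal non-face is an
   edge, so a non-face F of size l+1 contains a non-edge {x, y} and x_F is a
   multiple of x_{x,y}.  Conversely a squarefree x_F divisible by x_G has
   G \subset F, and supersets of non-faces are non-faces. *)

Section FlagQuasiTree.
Variable n : nat.
Implicit Types (Fs : seq {set 'I_n}) (S F G : {set 'I_n}).

Definition covers_pairs Fs S :=
  forall x y, x \in S -> y \in S -> exists2 H, H \in Fs & [set x; y] \subset H.

Lemma covers_pairs_leaf Fs F S :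
  is_leaf (rcons Fs F) F -> covers_pairs (rcons Fs F) S ->
  S \subset F \/ covers_pairs Fs S.
Proof.
move=> [_ [only_F | [G [GFs GF Gbranch]]]] Scov.
  left; apply/subsetP => x xS; have [H /only_F -> ] := Scov x x xS xS.
  by move/subsetP; apply; rewrite !inE eqxx.
have [SF|/subsetPn [x xS xF]] := boolP (S \subset F); first by left.
right; have G_Fs : G \in Fs by move: GFs; rewrite mem_rcons inE (negbTE GF).
have SF_G : S :&: F \subset G.
  apply/subsetP => y /setIP [yS yF]; have [H HFs xyH] := Scov x y xS yS.
  have xH : x \in H by apply: (subsetP xyH); rewrite !inE eqxx.
  have HF : H != F by apply: contraNneq xF => <-.
  have /subsetP/(_ y) := Gbranch H HFs HF.
  rewrite !inE yF (subsetP xyH) ?inE ?eqxx ?orbT // => /(_ isT).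
  by case/andP.
move=> a b aS bS; have [H] := Scov a b aS bS.
rewrite mem_rcons inE => /orP [/eqP -> abF | HFs abH]; last by exists H.
exists G => //; apply/subsetP => z zab; apply: (subsetP SF_G).
by rewrite inE (subsetP abF) // andbT; case/set2P: zab => ->.
Qed.

Lemma leaf_order_covers_pairs (s : seq {set 'I_n}) :
  (forall i, (i < size s)%N -> is_leaf (take i.+1 s) (nth set0 s i)) ->
  forall i S, (i <= size s)%N -> S != set0 -> covers_pairs (take i s) S ->
  exists2 H, H \in take i s & S \subset H.
Proof.
move=> leaves; elim=> [|i IH] S le_i_s /set0Pn [x xS] Scov.
  by have [H] := Scov x x xS xS; rewrite take0.
have take_rcons : take i.+1 s = rcons (take i s) (nth set0 s i).
  exact: take_nth.
have := leaves i le_i_s; rewrite take_rcons in Scov *.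
move=> /covers_pairs_leaf/(_ Scov) [SF | Scov'].
  by exists (nth set0 s i); rewrite // mem_rcons mem_head.
have [|H HFs SH] := IH S (ltnW le_i_s) _ Scov'; first by apply/set0Pn; exists x.
by exists H; rewrite // mem_rcons inE HFs orbT.
Qed.

Lemma face_in_facet (D : {set {set 'I_n}}) A :
  A \in D -> exists2 F, F \in facets D & A \subset F.
Proof.
move=> AD; have AA : A \in [pred F | (F \in D) && (A \subset F)].
  by rewrite inE AD subxx.
have [F /andP [FD AF] Fmax] := arg_maxnP (fun F : {set 'I_n} => #|F|) AA.
exists F => //; rewrite inE /is_facet FD /=.
apply/forall_inP => G GD; apply/implyP => FG.
rewrite eq_sym eqEcard FG /=; apply: Fmax.
by apply/andP; split; last exact: subset_trans AF FG.
Qed.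

Lemma quasi_tree_flag (D : {set {set 'I_n}}) S :
  is_complex D -> quasi_tree D -> S != set0 ->
  (forall x y, x \in S -> y \in S -> [set x; y] \in D) -> S \in D.
Proof.
move=> [_ D_closed] [s [_ [s_facets leaves]]] SN edgesD.
have Scov : covers_pairs (take (size s) s) S.
  move=> x y xS yS; have [F Ffacet xyF] := face_in_facet (edgesD x y xS yS).
  by exists F; rewrite // take_size s_facets.
have [F] := leaf_order_covers_pairs leaves (leqnn _) SN Scov.
by rewrite take_size s_facets inE => /andP [FD _]; apply: D_closed.
Qed.

Lemma nonface_has_nonedge (D : {set {set 'I_n}}) F :
  is_complex D -> quasi_tree D -> F != set0 -> F \notin D ->
  exists x y, [/\ x \in F, y \in F & [set x; y] \notin D].
Proof.
move=> Dc Dq FN FD.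
have : ~~ [forall x in F, forall y in F, [set x; y] \in D].
  apply: contra FD => /forall_inP edgesD; apply: quasi_tree_flag => // x y xF.
  by move/forall_inP: (edgesD x xF); apply.
by case/forall_inPn => x xF /forall_inPn [y yF xyD]; exists x, y.
Qed.

End FlagQuasiTree.

Section SquarefreeMonomials.
Variables (K : comNzRingType) (n : nat).
Implicit Types (F G : {set 'I_n}).

Lemma xF_setDM F G : G \subset F -> xF K (F :\: G) * xF K G = xF K F.
Proof.
move=> GF; rewrite /xF [RHS](big_setID G) /= mulrC.
by rewrite (setIidPr GF).
Qed.

(* Evaluate at the point that is 0 at i and 1 elsewhere, for i in G but not F. *)
Lemma xF_dvd_subset F G (q : {mpoly K[n]}) : xF K F = q * xF K G -> G \subset F.
Proof.
move=> xFE; apply/subsetP => i iG; apply/negPn/negP => iF.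
pose v j : K := if j == i then 0 else 1.
have := congr1 (meval v) xFE; rewrite mevalM /xF.
rewrite !(big_morph (meval v) (mevalM v) (meval1 v)).
rewrite (bigD1 i iG) /= mevalXU /v eqxx mul0r mulr0 big1.
  by move/eqP; rewrite oner_eq0.
by move=> j jF; rewrite mevalXU; case: eqP => // ji; rewrite -ji jF in iF.
Qed.

End SquarefreeMonomials.

Lemma in_ideal_mono (R : comNzRingType) (S1 S2 : R -> Prop) p :
  (forall g, S1 g -> S2 g) -> in_ideal S1 p -> in_ideal S2 p.
Proof. by move=> S12 [s [sS1 ->]]; exists s; split => // c /sS1 /S12. Qed.

Lemma gens_I_gens_J (K : comNzRingType) n (D : {set {set 'I_n}}) l g :
  is_complex D -> quasi_tree D -> gens_I (K := K) D l g -> gens_J D l g.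
Proof.
move=> Dc Dq [F [cardF FD ->]].
have FN : F != set0 by rewrite -card_gt0 cardF.
have [x [y [Fx Fy xyD]]] := nonface_has_nonedge Dc Dq FN FD.
have xy : x != y.
  by apply: contraNneq xyD => ->; rewrite setUid; case: Dc.
exists F; split => //; exists (xF K [set x; y]); split.
  by exists [set x; y]; rewrite cards2 xy.
exists (xF K (F :\: [set x; y])); rewrite xF_setDM //.
by apply/subsetP => z /set2P [] ->.
Qed.

Lemma gens_J_gens_I (K : comNzRingType) n (D : {set {set 'I_n}}) l g :
  is_complex D -> gens_J (K := K) D l g -> gens_I D l g.
Proof.
move=> [_ D_closed] [F [cardF -> [_ [[G [_ GD ->]] [q xFE]]]]].
exists F; split => //; apply: contra GD => FD.
exact: D_closed FD (xF_dvd_subset xFE).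
Qed.

Theorem lemma4p3 (K : fieldType) (n : nat) (D : {set {set 'I_n}}) (d l : nat) :
  is_complex D -> quasi_tree D -> max_face_size D = d ->
  (2 <= l)%N -> (l <= d - 1)%N ->
  forall p : {mpoly K[n]},
    in_ideal (gens_I D l) p <-> in_ideal (gens_J D l) p.
Proof.
move=> Dc Dq _ _ _ p; split; apply: in_ideal_mono => g.
- exact: gens_I_gens_J.
- exact: gens_J_gens_I.
Qed.
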